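(* Let $d_n$ be the number of equivalence classes of $n$-diagrams under the action of the dihedral group $D_{2n}$ of order $4n$ (the symmetry group of the $2n$-gon acting on its vertex set $[2n]$). Then $d_n\ge \underline{d}_n := (4n)^{-1}(2n-1)!!$ for $n\ge1$, and \[ d_n \sim \frac{(2n-1)!!}{4n} \quad \text{as } n\to\infty. \]
   Context: A chord diagram of order $n$ (an $n$-diagram) is a 3-regular graph on vertex set $[2n]=\{1,\dots,2n\}$ containing the $2n$-circuit $\Delta_{2n}=(1\,2\,\dots\,2n)$ as a subgraph; the edges not in $\Delta_{2n}$ are the chords (they form a perfect matching of $[2n]$). Given a group $G$ of permutations of $[2n]$ acting on $\Delta_{2n}$, two $n$-diagrams are equivalent if some $g\in G$ takes the chords of the first onto the chords of the second. *)

From HB Require Import structures.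
From mathcomp Require Import all_boot all_order all_algebra all_fingroup.
From mathcomp Require Import all_classical all_reals topology normedtype sequences.

Set Implicit Arguments.
Unset Strict Implicit.
Unset Printing Implicit Defensive.

(* Vertices of the 2n-gon: [2n] = {1,...,2n} is modelled by 'I_(n.*2) = {0,...,2n-1}. *)

(* An n-diagram is determined by its set of chords, a perfect matching of the
   vertex set; we represent it as a fixed-point-free involution m of 'I_(n.*2)
   (the chords are the pairs {i, m i}). *)
Definition chord_diagrams (n : nat) : {set {perm 'I_(n.*2)}} :=
  [set m : {perm 'I_(n.*2)} | [forall i, (m (m i) == i) && (m i != i)]].

Lemma ord_pos (N : nat) (i : 'I_N) : 0 < N.
Proof. exact: leq_ltn_trans (leq0n i) (ltn_ord i). Qed.

(* Elements of the dihedral group D_{2N} (order 2N) acting on Z/N: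
   dihf N false a : i |-> a + i  (rotations),
   dihf N true  a : i |-> a - i  (reflections), a ranging over 'I_N. *)
Definition dihf (N : nat) (b : bool) (a : 'I_N) (i : 'I_N) : 'I_N :=
  Ordinal (ltn_pmod (if b then a + (N - i) else a + i) (ord_pos i)).

(* m and m' are equivalent under D_{4n} (acting on the 2n vertices) if some
   dihedral g maps every chord {i, m i} of m onto a chord {g i, g (m i)} of m'. *)
Definition dih_equiv (n : nat) (m m' : {perm 'I_(n.*2)}) : Prop :=
  exists (b : bool) (a : 'I_(n.*2)),
    forall i : 'I_(n.*2), m' (dihf b a i) = dihf b a (m i).

Definition d (n : nat) : nat :=
  #|[set [set m' in chord_diagrams n | `[< dih_equiv m m' >]]
        | m in chord_diagrams n]|.

Definition dfact (n : nat) : nat := \prod_(i < n) (i.*2).+1.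

(* The equivalence class of a diagram m is its orbit under conjugation by the
   dihedral group of order 4n, so it has at most 4n elements, with equality
   unless m commutes with some g = p q^-1, p != q.  As there are (2n-1)!!
   diagrams, this gives the lower bound, and the asymptotics follow once the
   diagrams with a nontrivial stabiliser are shown to be O((2n-1)!!/n^2).
   A non-identity dihedral g fixes at most two vertices, and an involution
   commuting with g is built by choosing partners one g-orbit at a time: the
   partner of a fixed point is the other fixed point, and the partner of a
   point whose orbit has k >= 2 elements lies in the same orbit (k choices,
   k points removed) or elsewhere (at most s choices, 2k points removed).
   Hence there are at most ((s+3)/4)!! 2^s of them, which is tiny compared
   with (2n-1)!! for s = 2n. *)

From HB Require Import structures.
From mathcomp Require Import all_boot all_order all_algebra all_fingroup.
From mathcomp Require Import boolp zify ring.
Import GRing.Theory.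

Set Implicit Arguments.
Unset Strict Implicit.
Unset Printing Implicit Defensive.

Lemma dfact0 : dfact 0 = 1.
Proof. exact: big_ord0. Qed.

Lemma dfactS c : dfact c.+1 = c.*2.+1 * dfact c.
Proof. by rewrite /dfact big_ord_recr /= mulnC. Qed.

Lemma dfact_gt0 c : 0 < dfact c.
Proof. by elim: c => [|c IH]; rewrite ?dfact0 // dfactS muln_gt0. Qed.

Lemma leq_dfact a b : a <= b -> dfact a <= dfact b.
Proof.
move=> /subnK <-; elim: (b - a) => // k IH.
by rewrite addSn dfactS (leq_trans IH) // leq_pmull.
Qed.

Lemma dfactD_ge c k : dfact c * c.*2.+1 ^ k <= dfact (c + k).
Proof.
elim: k => [|k IH]; first by rewrite expn0 muln1 addn0.
rewrite addnS dfactS expnS mulnCA.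
by apply: leq_mul => //; rewrite ltnS leq_double leq_addr.
Qed.

Fixpoint nmatchings s :=
  match s with 0 => 1 | 1 => 0 | s'.+2 => s'.+1 * nmatchings s' end.

Lemma nmatchings_double n : nmatchings n.*2 = dfact n.
Proof. by elim: n => [|n IH]; rewrite ?dfact0 // doubleS /= IH dfactS. Qed.

(* The factor [2 ^ s] pays for the [k] choices inside an orbit of size [k]
   ([cent_bound_subk]), the double factorial for the [s] choices elsewhere
   ([cent_bound_sub4]). *)
Definition cent_bound s := dfact ((s + 3) %/ 4) * 2 ^ s.

Lemma cent_bound0 : cent_bound 0 = 1.
Proof. by rewrite /cent_bound dfact0. Qed.

Lemma leq_cent_bound s t : s <= t -> cent_bound s <= cent_bound t.
Proof.
move=> st; rewrite /cent_bound leq_mul ?leq_pexp2l // leq_dfact //.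
by apply: leq_div2r; rewrite leq_add2r.
Qed.

Lemma cent_bound_subk k s : 0 < k -> k <= s -> k.*2 * cent_bound (s - k) <= cent_bound s.
Proof.
move=> k_gt0 ks; rewrite /cent_bound.
have split2 : 2 ^ s = 2 ^ k * 2 ^ (s - k) by rewrite -expnD subnKC.
have le_dfact : dfact ((s - k + 3) %/ 4) <= dfact ((s + 3) %/ 4).
  by apply: leq_dfact; apply: leq_div2r; rewrite leq_add2r leq_subr.
have le_k2 : k.*2 <= 2 ^ k.
  case: k k_gt0 {ks split2 le_dfact} => // k _.
  by rewrite expnS -mul2n leq_mul2l /= ltn_expl.
rewrite split2 mulnCA mulnA [X in _ <= X]mulnCA [X in _ <= X]mulnA.
by rewrite leq_mul2r (mulnC (2 ^ k)) leq_mul ?orbT.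
Qed.

Lemma cent_bound_sub4 s : s.*2 * cent_bound (s - 4) <= cent_bound s.
Proof.
case: s => [|[|[|[|t]]]]; rewrite /cent_bound ?dfactS ?dfact0 //.
have -> : t.+4 - 4 = t by lia.
have -> : (t.+4 + 3) %/ 4 = ((t + 3) %/ 4).+1 by lia.
rewrite dfactS.
set c := (t + 3) %/ 4.
have le_t : t.+4.*2 <= 16 * c.*2.+1 by rewrite /c; lia.
have -> : c.*2.+1 * dfact c * 2 ^ t.+4 = 16 * c.*2.+1 * (dfact c * 2 ^ t).
  by rewrite !expnS; ring.
by rewrite leq_mul2r le_t orbT.
Qed.

(* [2 ^ 28 = 4 ^ 3 * 4 * 16 ^ 5] absorbs the constants. *)
Lemma cent_bound_small n : 2 ^ 28 <= n -> n.+1 * (4 * n) ^ 3 * cent_bound n.*2 <= dfact n.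
Proof.
move=> n_large; rewrite /cent_bound.
set c := (n.*2 + 3) %/ 4; set u := n - c.
have le_cn : c <= n by rewrite /c; lia.
have le_base : n.+1 <= c.*2.+1 by rewrite /c; lia.
have le_n : n <= u.*2.+1 by rewrite /u /c; lia.
have u_large : 5 < u by rewrite /u /c; lia.
rewrite -[X in _ <= dfact X](subnKC le_cn) -/u.
apply: leq_trans (dfactD_ge c u).
have -> : 2 ^ n.*2 = 4 ^ n by rewrite -muln2 mulnC expnM.
rewrite mulnC -!mulnA leq_mul2l; apply/orP; right.
have le_4n : 4 ^ n <= 4 * (16 ^ 5 * 16 ^ (u - 5)).
  have -> : 16 ^ 5 * 16 ^ (u - 5) = 4 ^ u.*2.
    by rewrite -expnD subnKC ?(ltnW u_large) // -muln2 mulnC expnM.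
  by rewrite -expnS leq_pexp2l.
apply: (@leq_trans (n.+1 ^ 5 * 16 ^ (u - 5))).
  apply: (@leq_trans (n.+1 * (4 * n) ^ 3 * (4 * (16 ^ 5 * 16 ^ (u - 5))))).
    by rewrite mulnC leq_mul2l le_4n orbT.
  have -> : n.+1 * (4 * n) ^ 3 * (4 * (16 ^ 5 * 16 ^ (u - 5))) =
            n.+1 * n ^ 3 * 2 ^ 28 * 16 ^ (u - 5) by ring.
  have -> : n.+1 ^ 5 = n.+1 * n.+1 ^ 3 * n.+1 by ring.
  rewrite leq_mul2r; apply/orP; right.
  apply: leq_mul; first by rewrite leq_mul // leq_exp2r.
  exact: leq_trans n_large (leqnSn n).
rewrite -{2}(subnK (ltnW u_large)) expnD mulnC leq_mul // leq_exp2r //; lia.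
Qed.

Lemma card_fibers (aT rT : finType) (A : {set aT}) (f : aT -> rT) :
  #|A| = \sum_y #|[set a in A | f a == y]|.
Proof.
rewrite -sum1_card (partition_big f predT) //=.
by apply: eq_bigr => y _; rewrite -sum1_card; apply: eq_bigl => a; rewrite inE.
Qed.

Lemma card_bigcup_le (I T : finType) (P : pred I) (F : I -> {set T}) :
  #|\bigcup_(i | P i) F i| <= \sum_(i | P i) #|F i|.
Proof.
elim/big_rec2: _ => [|i k U _ leUk]; first by rewrite cards0.
by rewrite (leq_trans (leq_card_setU (F i) U).1) ?leq_add2l.
Qed.

Section CommutingInvolutions.
Variable T : finType.
Implicit Types (h : {perm T}) (S : {set T}) (m : {ffun T -> T}).

Definition comm_invs h S : {set {ffun T -> T}} :=
  [set m : {ffun T -> T} | [&& [forall i, m (m i) == i],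
                              [forall i, (m i == i) == (i \notin S)]
                            & [forall i, m (h i) == h (m i)]]].

Lemma comm_invsP h S m : reflect
  [/\ forall i, m (m i) = i, forall i, (m i == i) = (i \notin S) &
      forall i, m (h i) = h (m i)] (m \in comm_invs h S).
Proof.
rewrite inE; apply: (iffP and3P) => [[/forallP mK /forallP moved /forallP mh]|].
  by split=> i; [exact: eqP (mK i) | exact: eqP (moved i) | exact: eqP (mh i)].
by case=> mK moved mh; split; apply/forallP => i; rewrite ?mK ?moved ?mh.
Qed.

Lemma comm_invs0 h : comm_invs h set0 = [set [ffun z => z]].
Proof.
apply/setP=> m; rewrite in_set1; apply/comm_invsP/eqP => [[_ fixm _]|->].
  by apply/ffunP => z; rewrite ffunE; apply/eqP; rewrite fixm inE.
by split=> i; rewrite !ffunE ?eqxx ?inE.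
Qed.

Lemma commute_expg h (f : T -> T) :
  (forall i, f (h i) = h (f i)) -> forall j i, f ((h ^+ j)%g i) = (h ^+ j)%g (f i).
Proof.
move=> fh; elim=> [|j IH] i; first by rewrite !expg0 !perm1.
by rewrite expgSr !permM fh IH.
Qed.

Lemma mem_porbitS h x z : (h z \in porbit h x) = (z \in porbit h x).
Proof. by rewrite -!eq_porbit_mem; have := porbit_perm h 1 z; rewrite expg1 => ->. Qed.

Definition fiber h S x y := [set m in comm_invs h S | m x == y].

Section Fiber.
Variables (h : {perm T}) (S : {set T}) (x y : T).
Hypothesis xS : x \in S.
Let O := porbit h x :|: porbit h y.

(* [m] maps the orbit of [x] bijectively onto the orbit of [y]. *)
Lemma fiber_orbits m : m \in fiber h S x y ->
  [/\ y \in S, y != x, porbit h x \subset S, porbit h y \subset S &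
      #|porbit h y| = #|porbit h x| ].
Proof.
case/setIdP=> /comm_invsP[mK movedS mh] /eqP mxy.
have mhj := commute_expg mh.
have inS z : m z != z -> z \in S by rewrite movedS negbK.
have orbit_y : porbit h y = m @: porbit h x.
  apply/setP=> z; apply/porbitP/imsetP.
    by case=> j ->; exists ((h ^+ j)%g x); rewrite ?mem_porbit // mhj mxy.
  by case=> w /porbitP[j ->] ->; exists j; rewrite mhj mxy.
have orbit_xS : porbit h x \subset S.
  apply/subsetP=> z /porbitP[j ->]; apply: inS.
  by rewrite mhj (inj_eq (@perm_inj _ _)) movedS xS.
split=> //.
- by apply: inS; rewrite -mxy mK eq_sym movedS xS.
- by rewrite -mxy movedS xS.
- apply/subsetP; rewrite orbit_y => _ /imsetP[w xw ->]; apply: inS.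
  move: xw => /porbitP[j ->].
  by rewrite mK mhj (inj_eq (@perm_inj _ _)) eq_sym movedS xS.
- by rewrite orbit_y card_imset //; apply: (can_inj mK).
Qed.

Definition drop_orbits m : {ffun T -> T} := [ffun z => if z \in O then z else m z].

Lemma drop_orbits_comm_invs m : m \in fiber h S x y -> drop_orbits m \in comm_invs h (S :\: O).
Proof.
case/setIdP=> /comm_invsP[mK movedS mh] /eqP mxy.
have mhj := commute_expg mh.
have Oh z : (h z \in O) = (z \in O) by rewrite !inE !mem_porbitS.
have mO z : (m z \in O) = (z \in O).
  suff mO z' : z' \in O -> m z' \in O.
    by apply/idP/idP => [/mO|/mO //]; rewrite mK.
  rewrite !inE => /orP[] /porbitP[j ->]; apply/orP.
    by right; rewrite mhj mxy mem_porbit.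
  by left; rewrite -mxy -mhj mK mem_porbit.
have dropE z : drop_orbits m z = if z \in O then z else m z by rewrite ffunE.
apply/comm_invsP; split=> i.
- by rewrite (dropE i); case: ifP => iO; rewrite dropE ?mO iO ?mK.
- by rewrite dropE in_setD negb_and negbK; case: ifP => iO; rewrite ?eqxx ?movedS.
- by rewrite !dropE Oh; case: ifP.
Qed.

Lemma drop_orbits_inj : {in fiber h S x y &, injective drop_orbits}.
Proof.
move=> m1 m2 /setIdP[/comm_invsP[m1K _ m1h] /eqP m1x].
move=> /setIdP[/comm_invsP[m2K _ m2h] /eqP m2x] eq_drop.
apply/ffunP=> z; have := congr1 (fun f : {ffun T -> T} => f z) eq_drop.
rewrite !ffunE; case: ifP => // zO _.
move: zO; rewrite inE => /orP[] /porbitP[j ->].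
  by rewrite (commute_expg m1h) (commute_expg m2h) m1x m2x.
by rewrite -{1}m1x -m2x -(commute_expg m1h) -(commute_expg m2h) m1K m2K.
Qed.

Lemma card_fiber_le : #|fiber h S x y| <= #|comm_invs h (S :\: O)|.
Proof.
rewrite -(card_in_imset drop_orbits_inj); apply: subset_leq_card.
by apply/subsetP=> _ /imsetP[m mF ->]; apply: drop_orbits_comm_invs.
Qed.

End Fiber.

Section Recursion.
Variables (h : {perm T}) (S : {set T}) (x : T).
Hypothesis xS : x \in S.
Hypothesis IH : forall S', #|S'| < #|S| -> #|comm_invs h S'| <= cent_bound #|S'|.

Lemma card_fiber_bound y m : m \in fiber h S x y ->
  #|fiber h S x y| <= cent_bound (#|S| - #|porbit h x :|: porbit h y|).
Proof.
move=> mF; have [_ _ pxS pyS _] := fiber_orbits xS mF.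
set O := porbit h x :|: porbit h y.
have OS : O \subset S by rewrite subUset pxS pyS.
have cardSO : #|S :\: O| = #|S| - #|O| by rewrite cardsD (setIidPr OS).
have O_gt0 : 0 < #|O| by rewrite card_gt0; apply/set0Pn; exists x; rewrite inE porbit_id.
apply: leq_trans (card_fiber_le h S x y) _; rewrite -cardSO; apply: IH.
by rewrite cardSO ltn_subrL O_gt0 card_gt0; apply/set0Pn; exists x.
Qed.

Lemma sum_fibers_fixed : h x = x -> #|[set z | h z == z]| <= 2 ->
  \sum_y #|fiber h S x y| <= cent_bound #|S|.
Proof.
move=> hx hfix; pose F := [set y | (h y == y) && (y != x)].
have cardF : #|F| <= 1.
  have /subset_leq_card : F \subset [set z | h z == z] :\ x.
    by apply/subsetP=> z; rewrite !inE => /andP[-> ->].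
  by move: hfix; rewrite (cardsD1 x) inE hx eqxx; lia.
have fib y : #|fiber h S x y| <= (if y \in F then cent_bound (#|S| - 2) else 0).
  case: (set_0Vmem (fiber h S x y)) => [-> | [m mF]]; first by rewrite cards0.
  have [_ yx _ _ _] := fiber_orbits xS mF.
  have hy : h y = y.
    by case/setIdP: mF => /comm_invsP[_ _ mh] /eqP <-; rewrite -mh hx.
  rewrite inE hy eqxx yx; apply: leq_trans (card_fiber_bound mF) _.
  apply/leq_cent_bound/leq_sub2l.
  apply: (@leq_trans #|[set x; y]|); first by rewrite cards2 eq_sym yx.
  by apply: subset_leq_card; rewrite subUset !sub1set !inE !porbit_id orbT.
apply: leq_trans (leq_sum _ (fun y _ => fib y)) _.
rewrite -big_mkcond sum_nat_const /=.
by apply: leq_trans (leq_mul cardF (leq_cent_bound (leq_subr 2 _))) _; rewrite mul1n.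
Qed.

Lemma sum_fibers_moved : h x != x -> porbit h x \subset S ->
  \sum_y #|fiber h S x y| <= cent_bound #|S|.
Proof.
move=> hx pxS; set k := #|porbit h x|.
have k_ge2 : 2 <= k.
  apply: (@leq_trans #|[set x; h x]|); first by rewrite cards2 eq_sym hx.
  by apply: subset_leq_card; rewrite subUset !sub1set mem_porbitS porbit_id.
have le_kS : k <= #|S| := subset_leq_card pxS.
have fib y : #|fiber h S x y| <=
    (if y \in porbit h x then cent_bound (#|S| - k) else 0) +
    (if y \in S then cent_bound (#|S| - 4) else 0).
  case: (set_0Vmem (fiber h S x y)) => [-> | [m mF]]; first by rewrite cards0.
  have [yS _ _ _ card_y] := fiber_orbits xS mF.
  apply: leq_trans (card_fiber_bound mF) _.
  case: (boolP (y \in porbit h x)) => ypx.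
    by rewrite (eqP (_ : porbit h y == porbit h x)) ?setUid ?leq_addr ?eq_porbit_mem.
  rewrite yS add0n; apply/leq_cent_bound/leq_sub2l.
  have disj : porbit h x :&: porbit h y = set0.
    apply/setP=> z; rewrite !inE; apply/negbTE/andP => -[zx zy].
    have zxE : porbit h z = porbit h x by apply/eqP; rewrite eq_porbit_mem.
    have zyE : porbit h z = porbit h y by apply/eqP; rewrite eq_porbit_mem.
    by move: ypx; rewrite -zxE zyE porbit_id.
  by rewrite cardsU disj cards0 subn0 card_y -/k; lia.
apply: leq_trans (leq_sum _ (fun y _ => fib y)) _.
rewrite big_split /= -!big_mkcond !sum_nat_const /= -/k.
have := cent_bound_subk (ltnW k_ge2) le_kS; have := cent_bound_sub4 #|S|.
by rewrite -!doubleMl; lia.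
Qed.

End Recursion.

Lemma card_comm_invs_le h S : #|[set z | h z == z]| <= 2 ->
  #|comm_invs h S| <= cent_bound #|S|.
Proof.
move=> hfix; have [s] := ubnP #|S|; elim: s S => // s IHs S; rewrite ltnS => Ss.
have IH S' : #|S'| < #|S| -> #|comm_invs h S'| <= cent_bound #|S'|.
  by move=> ltS'; apply: IHs; apply: leq_trans Ss.
case: (set_0Vmem S) => [-> | [x xS]]; first by rewrite comm_invs0 cards1 cards0 cent_bound0.
case: (set_0Vmem (comm_invs h S)) => [-> | [m0 m0S]]; first by rewrite cards0.
rewrite (card_fibers _ (fun m => m x)) -/(fiber h S x _).
have [hx | hx] := eqVneq (h x) x; first exact: sum_fibers_fixed.
have m0F : m0 \in fiber h S x (m0 x) by rewrite inE m0S eqxx.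
by have [_ _ pxS _ _] := fiber_orbits xS m0F; apply: sum_fibers_moved.
Qed.

Lemma porbit1 (z : T) : porbit 1 z = [set z].
Proof.
apply/setP=> w; rewrite inE; apply/porbitP/eqP => [[j ->]|->].
  by rewrite expg1n perm1.
by exists 0; rewrite expg0 perm1.
Qed.

Definition pair_up (x y : T) m : {ffun T -> T} :=
  [ffun z => if z == x then y else if z == y then x else m z].

Lemma pair_upK S x y m : x \in S -> y \in S -> y != x ->
  m \in comm_invs 1 (S :\: [set x; y]) ->
  [/\ pair_up x y m \in fiber 1 S x y & drop_orbits 1 x y (pair_up x y m) = m].
Proof.
move=> xS yS yx /comm_invsP[mK movedS _].
have mx : m x = x by apply/eqP; rewrite movedS !inE eqxx.
have my : m y = y by apply/eqP; rewrite movedS !inE eqxx orbT.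
have pairE z : pair_up x y m z = if z == x then y else if z == y then x else m z.
  by rewrite ffunE.
split; last first.
  apply/ffunP=> z; rewrite ffunE !porbit1 pairE !inE.
  by case: (eqVneq z x) => [->|zx] //=; case: (eqVneq z y) => [->|zy].
apply/setIdP; split; last by rewrite pairE eqxx.
apply/comm_invsP; split=> i; last by rewrite !perm1.
- rewrite !pairE; case: (eqVneq i x) => [->|ix]; first by rewrite (negbTE yx) eqxx.
  case: (eqVneq i y) => [->|iy]; first by rewrite eqxx.
  have [mix miy] : m i != x /\ m i != y.
    by split; apply/eqP => mi; [move: ix | move: iy]; rewrite -(mK i) mi ?mx ?my eqxx.
  by rewrite (negbTE mix) (negbTE miy) mK.
- rewrite pairE; case: (eqVneq i x) => [->|ix]; first by rewrite (negbTE yx) xS.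
  case: (eqVneq i y) => [->|iy]; first by rewrite eq_sym (negbTE yx) yS.
  by rewrite movedS !inE negb_and negb_or ix iy.
Qed.

Section Matchings.
Variables (S : {set T}) (x : T).
Hypothesis xS : x \in S.
Hypothesis IH : forall S', #|S'| < #|S| -> #|comm_invs 1 S'| = nmatchings #|S'|.

Lemma card_fiber1 y :
  #|fiber 1 S x y| = if y \in S :\ x then nmatchings (#|S| - 2) else 0.
Proof.
rewrite !inE; case: (boolP ((y != x) && (y \in S))) => [/andP[yx yS]|not_yS]; last first.
  apply/eqP; rewrite cards_eq0; apply/eqP/setP=> m; rewrite in_set0.
  apply/negbTE/negP => mF; have [yS yx _ _ _] := fiber_orbits xS mF.
  by rewrite yx yS in not_yS.
have cardSxy : #|S :\: [set x; y]| = #|S| - 2.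
  by rewrite cardsD (setIidPr _) ?cards2 1?eq_sym ?yx // subUset !sub1set xS yS.
have cardM : #|comm_invs 1 (S :\: [set x; y])| = nmatchings (#|S| - 2).
  by rewrite -cardSxy IH // cardSxy ltn_subrL card_gt0; apply/set0Pn; exists x.
apply/eqP; rewrite eqn_leq -cardM; apply/andP; split.
  by have := card_fiber_le 1 S x y; rewrite !porbit1.
rewrite -(@card_in_imset _ _ (pair_up x y)); last first.
  move=> m1 m2 /(pair_upK xS yS yx)[_ m1K] /(pair_upK xS yS yx)[_ m2K] eq12.
  by rewrite -m1K -m2K eq12.
apply/subset_leq_card/subsetP => _ /imsetP[m mS ->].
by have [] := pair_upK xS yS yx mS.
Qed.

End Matchings.

Lemma card_comm_invs1 S : #|comm_invs 1 S| = nmatchings #|S|.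
Proof.
have [s] := ubnP #|S|; elim: s S => // s IHs S; rewrite ltnS => Ss.
case: (set_0Vmem S) => [-> | [x xS]]; first by rewrite comm_invs0 cards1 cards0.
have IH S' : #|S'| < #|S| -> #|comm_invs 1 S'| = nmatchings #|S'|.
  by move=> ltS'; apply: IHs; apply: leq_trans Ss.
rewrite (card_fibers _ (fun m => m x)) -/(fiber 1 S x _).
rewrite (eq_bigr _ (fun y _ => card_fiber1 xS IH y)) -big_mkcond sum_nat_const.
by rewrite (cardsD1 x S) xS; case: #|S :\ x| => [|t] //=; rewrite subSS subn1.
Qed.

End CommutingInvolutions.

Section Dihedral.
Variable n' : nat.
Local Notation N := n'.+1.*2.
Local Notation ZN := 'Z_N.
Local Open Scope ring_scope.

Lemma dihfE (b : bool) (a i : 'I_N) :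
  dihf b a i = (if b then (a : ZN) - i else (a : ZN) + i).
Proof. by apply: val_inj; case: b => //=; rewrite modnDmr. Qed.

Definition dih_comp (b1 : bool) (a1 : 'I_N) (b2 : bool) (a2 : 'I_N) : 'I_N :=
  if b1 then (a1 : ZN) - a2 else (a1 : ZN) + a2.

Lemma dihf_comp (b1 : bool) (a1 : 'I_N) (b2 : bool) (a2 i : 'I_N) :
  dihf b1 a1 (dihf b2 a2 i) = dihf (b1 (+) b2) (dih_comp b1 a1 b2 a2) i.
Proof. by rewrite !dihfE /dih_comp; case: b1; case: b2 => /=; ring. Qed.

Definition dih_inv (b : bool) (a : 'I_N) : 'I_N := if b then a else - (a : ZN).

Lemma dihfK (b : bool) (a : 'I_N) : cancel (dihf b a) (dihf b (dih_inv b a)).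
Proof. by move=> i; rewrite !dihfE /dih_inv; case: b => /=; ring. Qed.

Lemma dihfVK (b : bool) (a : 'I_N) : cancel (dihf b (dih_inv b a)) (dihf b a).
Proof. by move=> i; rewrite !dihfE /dih_inv; case: b => /=; ring. Qed.

Lemma dihf_inj (b : bool) (a : 'I_N) : injective (dihf b a).
Proof. exact: can_inj (dihfK b a). Qed.

Lemma dihf0 (i : 'I_N) : dihf false (0 : ZN) i = i.
Proof. by rewrite dihfE /= add0r. Qed.

Lemma Zp_double_eq0 (c : ZN) : c + c = 0 -> c = 0 \/ c = inZp n'.+1.
Proof.
move=> /(congr1 val) /= /eqP cc0.
suff [c0 | cn] : (c : nat) = 0%N \/ (c : nat) = n'.+1.
- by left; apply: val_inj.
- by right; apply: val_inj; rewrite /= cn modn_small //; change (n'.+1 < N)%N; lia.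
have : (N %| c + c)%N by [].
move: (ltn_ord c); rewrite /= -/N; move: (nat_of_ord c) => v v_lt.
rewrite addnn -!muln2 dvdn_pmul2r // => /dvdnP[k vk].
have k_lt2 : (k < 2)%N by move: v_lt; rewrite vk -muln2; nia.
by case: k k_lt2 vk => [|[|]] // _ ->; [left | right; rewrite mul1n].
Qed.

Lemma card_Zp_halves (c : ZN) : (#|[set i : ZN | (i + i == c)%R]| <= 2)%N.
Proof.
case: (pickP (fun i : ZN => i + i == c)) => [i0 /eqP i0c | no_half]; last first.
  by rewrite eq_card0 // => i; rewrite inE no_half.
apply: (@leq_trans #|[set i0; i0 + inZp n'.+1]|); last by rewrite cards2; case: (_ != _).
apply/subset_leq_card/subsetP => j; rewrite !inE => /eqP jc.
have : (j - i0) + (j - i0) = 0 by rewrite addrACA -opprD jc i0c subrr.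
case/Zp_double_eq0 => /eqP; rewrite subr_eq ?add0r => /eqP ->; first by rewrite eqxx.
by rewrite addrC eqxx orbT.
Qed.

(* Two distinct rotations disagree everywhere, and a rotation and a reflection
   agree exactly at the solutions of [i + i = c] for some [c]. *)
Lemma card_dihf_eq (p q : bool * 'I_N) :
  p != q -> (#|[set i | dihf p.1 p.2 i == dihf q.1 q.2 i]| <= 2)%N.
Proof.
case: p q => [b1 a1] [b2 a2] /=; rewrite xpair_eqE negb_and.
have [<- /= a12 | b12 _] := eqVneq b1 b2.
  rewrite eq_card0 // => i; rewrite !inE !dihfE; apply/negbTE; apply: contra a12.
  by case: b1 => /eqP/addIr/eqP.
have := card_Zp_halves (if b1 then (a1 : ZN) - a2 else (a2 : ZN) - a1).
apply/leq_trans/subset_leq_card/subsetP => i.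
rewrite !inE !dihfE => /eqP; move: b12; case: b1; case: b2 => //= _ e.
  by apply/eqP; rewrite -(subrK i (a1 : ZN)) e; ring.
by apply/eqP; rewrite -(subrK i (a2 : ZN)) -e; ring.
Qed.

End Dihedral.

Section Diagrams.
Variable n' : nat.
Local Notation n := n'.+1.
Local Notation N := n.*2.
Local Notation X := (chord_diagrams n).
Local Notation G := (bool * 'I_N)%type.
Implicit Types (m : {perm 'I_N}) (p : G).

Lemma chord_diagramsP m : reflect (forall i, m (m i) = i /\ m i != i) (m \in X).
Proof.
rewrite inE; apply: (iffP forallP) => mX i; first by case/andP: (mX i) => /eqP.
by case: (mX i) => -> ->; rewrite eqxx.
Qed.

Definition ffun_of_perm m : {ffun 'I_N -> 'I_N} := [ffun i => m i].

Lemma ffun_of_perm_inj : injective ffun_of_perm.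
Proof.
move=> m1 m2 eq12; apply/permP => i.
by have := congr1 (fun f : {ffun 'I_N -> 'I_N} => f i) eq12; rewrite !ffunE.
Qed.

Lemma comm_invs_ffun_of_perm m (h : {perm 'I_N}) :
  (ffun_of_perm m \in comm_invs h setT) = (m \in X) && [forall i, m (h i) == h (m i)].
Proof.
apply/comm_invsP/andP => [[mK moved mh] | [/chord_diagramsP mX /forallP mh]].
  split; last by apply/forallP => i; have := mh i; rewrite !ffunE => ->.
  apply/chord_diagramsP => i; have := mK i; have := moved i.
  by rewrite !ffunE in_setT => /negbT -> ->.
split=> i; rewrite !ffunE ?in_setT; last exact/eqP.
  by case: (mX i).
by apply/negbTE; case: (mX i).
Qed.

Lemma card_chord_diagrams : #|X| = dfact n.
Proof.
have <- : #|comm_invs 1 [set: 'I_N]| = dfact n.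
  by rewrite card_comm_invs1 cardsT card_ord nmatchings_double.
rewrite -(card_imset _ ffun_of_perm_inj); apply: eq_card => f; apply/imsetP/idP.
  case=> m mX ->; rewrite comm_invs_ffun_of_perm mX.
  by apply/forallP => i; rewrite !perm1.
case/comm_invsP=> fK moved _; exists (perm (can_inj fK)); last first.
  by apply/ffunP => i; rewrite ffunE permE.
by apply/chord_diagramsP => i; rewrite !permE fK moved in_setT.
Qed.

Definition fixed_diagrams (h : {perm 'I_N}) :=
  [set m in X | [forall i, m (h i) == h (m i)]].

Lemma card_fixed_diagrams (h : {perm 'I_N}) :
  #|[set z | h z == z]| <= 2 -> #|fixed_diagrams h| <= cent_bound N.
Proof.
move=> hfix; rewrite -(card_imset _ ffun_of_perm_inj).
have := card_comm_invs_le setT hfix; rewrite cardsT card_ord; apply: leq_trans.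
apply/subset_leq_card/subsetP => _ /imsetP[m mF ->].
by move: mF; rewrite comm_invs_ffun_of_perm inE.
Qed.

Definition dih_perm p : {perm 'I_N} := perm (@dihf_inj n' p.1 p.2).

Lemma dih_permE (b : bool) (a : 'I_N) i : dih_perm (b, a) i = dihf b a i.
Proof. by rewrite permE. Qed.

Lemma card_dih : #|[set: G]| = 4 * n.
Proof. by rewrite cardsT card_prod card_bool card_ord; lia. Qed.

Definition conjd p m : {perm 'I_N} := ((dih_perm p)^-1 * m * dih_perm p)%g.

Lemma conjdE p m i : conjd p m i = dih_perm p (m ((dih_perm p)^-1%g i)).
Proof. by rewrite !permM. Qed.

Lemma conjd_chord p m : m \in X -> conjd p m \in X.
Proof.
move=> /chord_diagramsP mX; apply/chord_diagramsP => i; rewrite !conjdE permK.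
have [mK mi] := mX ((dih_perm p)^-1%g i); split; first by rewrite mK permKV.
by apply: contra mi => /eqP eq_i; rewrite -(inj_eq (@perm_inj _ (dih_perm p))) eq_i permKV.
Qed.

Lemma dih_equivP m m' : dih_equiv m m' <-> exists p, m' = conjd p m.
Proof.
split=> [[b [a eq_m']] | [[b a] ->]]; last first.
  by exists b, a => i; rewrite conjdE -!dih_permE permK.
exists (b, a); apply/permP => j.
by rewrite conjdE -{1}(permKV (dih_perm (b, a)) j) !dih_permE eq_m'.
Qed.

Lemma dih_equiv_refl m : dih_equiv m m.
Proof. by exists false, (0%R : 'Z_N) => i; rewrite !dihf0. Qed.

Lemma dih_equiv_sym m m' : dih_equiv m m' -> dih_equiv m' m.
Proof.
case=> b [a eq_m']; exists b, (dih_inv b a) => j.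
by have := eq_m' (dihf b (dih_inv b a) j); rewrite dihfVK => ->; rewrite dihfK.
Qed.

Lemma dih_equiv_trans m1 m2 m3 : dih_equiv m1 m2 -> dih_equiv m2 m3 -> dih_equiv m1 m3.
Proof.
case=> b1 [a1 eq12] [b2 [a2 eq23]]; exists (b2 (+) b1), (dih_comp b2 a2 b1 a1) => i.
by rewrite -!dihf_comp eq23 eq12.
Qed.

Lemma dih_equiv_equivalence : {in X & &, equivalence_rel (fun m m' => `[< dih_equiv m m' >])}.
Proof.
move=> m1 m2 m3 _ _ _; split; first exact/asboolP/dih_equiv_refl.
move=> /asboolP eq12; apply/asboolP/asboolP => [eq13 | eq23].
  exact: dih_equiv_trans (dih_equiv_sym eq12) eq13.
exact: dih_equiv_trans eq12 eq23.
Qed.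

Definition diagram_class m := [set m' in X | `[< dih_equiv m m' >]].

Lemma diagram_classes_partition : partition [set diagram_class m | m in X] X.
Proof. exact: equivalence_partitionP dih_equiv_equivalence. Qed.

Lemma diagram_classE m : m \in X -> diagram_class m = [set conjd p m | p in [set: G]].
Proof.
move=> mX; apply/setP => m'; rewrite inE; apply/andP/imsetP.
  by case=> _ /asboolP /dih_equivP[p ->]; exists p.
by case=> p _ ->; split; [exact: conjd_chord | apply/asboolP/dih_equivP; exists p].
Qed.

Lemma card_diagram_class_le m : m \in X -> #|diagram_class m| <= 4 * n.
Proof. by move=> mX; rewrite diagram_classE // -card_dih leq_imset_card. Qed.

Lemma dfact_le_d : dfact n <= 4 * n * d n.
Proof.
rewrite -card_chord_diagrams (card_partition diagram_classes_partition).
rewrite mulnC -sum_nat_const; apply: leq_sum => _ /imsetP[m mX ->].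
exact: card_diagram_class_le.
Qed.

Definition symmetric_diagrams := [set m in X | #|diagram_class m| < 4 * n].

Lemma d_le_symmetric : 4 * n * d n <= dfact n + 4 * n * #|symmetric_diagrams|.
Proof.
rewrite -card_chord_diagrams (card_partition diagram_classes_partition).
set P := [set diagram_class m | m in X].
have card_small : #|[set A in P | #|A| < 4 * n]| <= #|symmetric_diagrams|.
  apply: leq_trans (leq_imset_card diagram_class _); apply/subset_leq_card/subsetP.
  by move=> A; rewrite inE => /andP[/imsetP[m mX ->] small]; apply: imset_f; rewrite inE mX.
apply: (@leq_trans (\sum_(A in P) (#|A| + (if #|A| < 4 * n then 4 * n else 0)))).
  rewrite mulnC -sum_nat_const; apply: leq_sum => A _.
  by case: ltnP => small; rewrite ?addn0 ?leq_addl.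
rewrite big_split /= leq_add2l -big_mkcondr /=.
rewrite (eq_bigl (mem [set A in P | #|A| < 4 * n])); last by move=> A /=; rewrite inE.
by rewrite sum_nat_const mulnC leq_mul2l card_small orbT.
Qed.

Definition dih_quot (pq : G * G) : {perm 'I_N} := (dih_perm pq.1 * (dih_perm pq.2)^-1)%g.

Lemma dih_quot_fixed pq : pq.1 != pq.2 -> #|[set z | dih_quot pq z == z]| <= 2.
Proof.
case: pq => [[b1 a1] [b2 a2]] ne; apply: leq_trans (card_dihf_eq ne).
apply/subset_leq_card/subsetP => z; rewrite !inE /dih_quot permM => /eqP fixz.
by rewrite -!dih_permE -{2}fixz permKV.
Qed.

Lemma symmetric_diagrams_sub :
  symmetric_diagrams \subset \bigcup_(pq : G * G | pq.1 != pq.2) fixed_diagrams (dih_quot pq).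
Proof.
apply/subsetP => m; rewrite inE => /andP[mX small].
have /injectivePn[p [q pq eq_pq]] : ~~ injectiveb (conjd ^~ m).
  apply: contraL small => /injectiveP inj.
  by rewrite diagram_classE // card_imset // card_dih ltnn.
apply/bigcupP; exists (p, q) => //; rewrite inE mX; apply/forallP => i; apply/eqP.
have := congr1 (fun f : {perm 'I_N} => f (dih_perm p i)) eq_pq.
by rewrite !conjdE permK /dih_quot !permM => ->; rewrite permK.
Qed.

Lemma card_symmetric_diagrams : #|symmetric_diagrams| <= (4 * n) ^ 2 * cent_bound N.
Proof.
apply: leq_trans (subset_leq_card symmetric_diagrams_sub) _.
apply: leq_trans (card_bigcup_le _ _) _.
apply: (@leq_trans (\sum_(pq : G * G) cent_bound N)).
  rewrite big_mkcond /=; apply: leq_sum => pq _.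
  by case: ifP => // ne; apply/card_fixed_diagrams/dih_quot_fixed; rewrite ne.
by rewrite sum_nat_const card_prod -cardsT card_dih.
Qed.

End Diagrams.

Lemma d_upper_bound n : 2 ^ 28 <= n -> n.+1 * (4 * n * d n) <= n.+2 * dfact n.
Proof.
case: n => [|n'] n_large; first by rewrite leqn0 expn_eq0 in n_large.
have sym_small : n'.+2 * (4 * n'.+1 * #|symmetric_diagrams n'|) <= dfact n'.+1.
  apply: leq_trans (cent_bound_small n_large).
  rewrite -[X in _ <= X]mulnA leq_mul2l expnS -[X in _ <= X]mulnA leq_mul2l.
  by rewrite card_symmetric_diagrams !orbT.
apply: leq_trans (leq_mul (leqnn _) (d_le_symmetric n')) _.
by rewrite mulnDr [X in _ <= X]mulSn addnC leq_add2r.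
Qed.

(* [classical_sets] reuses the names [set0], [setT], ... of [finset], so the
   analysis libraries are imported only now. *)
From mathcomp Require Import all_classical all_reals topology normedtype sequences.
Import numFieldNormedType.Exports.
Import Num.Theory.
Local Open Scope classical_set_scope.
Local Open Scope ring_scope.

Lemma dfact_div_le_d (R : numFieldType) n :
  (0 < n)%N -> (dfact n)%:R / (4 * n)%:R <= (d n)%:R :> R.
Proof.
case: n => [//|n'] _; rewrite ler_pdivrMr ?ltr0n ?muln_gt0 // -natrM ler_nat mulnC.
exact: dfact_le_d.
Qed.

Lemma d_ratio_ge1 (R : numFieldType) n :
  (0 < n)%N -> 1 <= (d n)%:R / ((dfact n)%:R / (4 * n)%:R) :> R.
Proof.
move=> n_gt0; rewrite ler_pdivlMr ?mul1r ?dfact_div_le_d //.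
by rewrite divr_gt0 ?ltr0n ?dfact_gt0 ?muln_gt0.
Qed.

Lemma d_ratio_le (R : numFieldType) n :
  (2 ^ 28 <= n)%N -> (d n)%:R / ((dfact n)%:R / (4 * n)%:R) <= 1 + n.+1%:R^-1 :> R.
Proof.
move=> n_large; have -> : 1 + n.+1%:R^-1 = n.+2%:R / n.+1%:R :> R.
  by rewrite -[n.+2%:R]natr1 mulrDl divff ?pnatr_eq0 // div1r.
rewrite invf_div mulrA ler_pdivrMr ?ltr0n ?dfact_gt0 // mulrAC ler_pdivlMr ?ltr0n //.
by rewrite -!natrM ler_nat mulnC (mulnC (d n)) d_upper_bound.
Qed.

Theorem corollary2 (R : realType) :
  (forall n : nat, (0 < n)%N ->
     (dfact n)%:R / (4 * n)%:R <= (d n)%:R :> R) /\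
  ((fun n : nat => (d n)%:R / ((dfact n)%:R / (4 * n)%:R) : R) @ \oo --> (1 : R)).
Proof.
split=> [n|]; first exact: dfact_div_le_d.
apply: (@squeeze_cvgr _ _ _ _ (cst 1) (fun n => 1 + harmonic n)); last 2 first.
- exact: cvg_cst.
- by rewrite -[X in _ --> X]addr0; apply: cvgD; [exact: cvg_cst | exact: cvg_harmonic].
exists (2 ^ 28)%N => // n /= n_large.
rewrite d_ratio_ge1 ?d_ratio_le //.
by apply: leq_trans n_large; rewrite expn_gt0.
Qed.
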